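(* Let $1\le n\le L$. A word $w\in\Omega_{L,n}$ with $w_1=\bullet_1$ belongs to $\Omega'^{\{1\}}$ if and only if, for every $i\in\{1,\dots,n\}$, every letter $\Box_i$ in $w$ occurs at a position (in the linear order $1,\dots,L$) to the right of the position of $\bullet_i$.
   Context: Particle labels are taken modulo $n$. $\Omega_{L,n}$ is the set of words $w_1\cdots w_L$ on the ring $\mathbb{Z}/L\mathbb{Z}$ over the alphabet $\{\bullet_1,\dots,\bullet_n,\Box_1,\dots,\Box_n\}$ in which each $\bullet_k$ occurs exactly once, the $\bullet_1,\dots,\bullet_n$ appear in this cyclic order, and the remaining $L-n$ letters are arbitrary $\Box_i$'s. For $w\in\Omega_{L,n}$ let $b_k$ be the position of $\bullet_k$ and $C_k$ the set of positions strictly between $b_k$ and $b_{k+1}$ going cyclically forward ($b_{n+1}=b_1$). For $i,k\in\{1,\dots,n\}$ set $w_\Box(i,k)=p_1\cdots p_{i-1}q_{i+1}\cdots q_kp_{k+1}\cdots p_n$ if $i\le k$ and $w_\Box(i,k)=q_1\cdots q_kp_{k+1}\cdots p_{i-1}q_{i+1}\cdots q_n$ if $k<i$ (empty products are $1$), as monomials in indeterminates $p_1,\dots,p_n,q_1,\dots,q_n$. The weight is the monomial $\mathrm{wt}(w)=\prod_{k=1}^n\prod_{j\in C_k}w_\Box(i_j,k)$ where $w_j=\Box_{i_j}$. For $I\subseteq\{1,\dots,n\}$, $\Omega^I_{L,n}$ is the set of $w\in\Omega_{L,n}$ with $\mathrm{wt}(w)\neq0$ when $q_k=0$ for $k\in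 I$ and all other rates are positive (equivalently, the monomial $\mathrm{wt}(w)$ contains no $q_k$ with $k\in I$), and $\Omega'^{I}$ is the set of $w\in\Omega^I_{L,n}$ with $w_1=\bullet_1$. *)

From mathcomp Require Import all_boot.
Set Implicit Arguments. Unset Strict Implicit. Unset Printing Implicit Defensive.

(* Conventions (0-indexed): particle labels are 'I_n (paper label k+1 is our k),
   positions are 0..L-1 (paper position j+1 is our j). *)
Definition letter (n : nat) := ('I_n + 'I_n)%type.
Definition Bullet {n} (k : 'I_n) : letter n := inl k.
Definition Box {n} (i : 'I_n) : letter n := inr i.

Section Words.
Variables (L n : nat).
Implicit Types (w : seq (letter n)) (i k m : 'I_n).

Definition bpos w k : nat := index (Bullet k) w.

Definition succl k : 'I_n := ordS k.

Definition fdist (a b : nat) : nat := if a == b then L else (b + L - a) %% L.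

(* j lies in C_k : strictly between b_k and b_{k+1}, going cyclically forward *)
Definition inC w k (j : nat) : bool :=
  [&& j < L, 0 < (j + L - bpos w k) %% L &
      (j + L - bpos w k) %% L < fdist (bpos w k) (bpos w (succl k))].

(* Omega_{L,n}: each bullet occurs exactly once, bullets in cyclic order
   (no bullet strictly inside any arc C_k), the rest are boxes. *)
Definition inOmega w : Prop :=
  [/\ size w = L,
      forall k, count_mem (Bullet k) w = 1 &
      forall k k', ~~ inC w k (bpos w k')].

(* The monomial w_Box(i,k) in p_1..p_n,q_1..q_n, given by its exponent vectors. *)
Definition wBox_pdeg i k m : nat :=
  if i <= k then ((m < i) || (k < m)) : nat else ((k < m) && (m < i)) : nat.
Definition wBox_qdeg i k m : nat :=
  if i <= k then ((i < m) && (m <= k)) : nat else ((m <= k) || (i < m)) : nat.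

Definition letter_pdeg w k j m : nat :=
  if onth w j is Some (inr i) then wBox_pdeg i k m else 0.
Definition letter_qdeg w k j m : nat :=
  if onth w j is Some (inr i) then wBox_qdeg i k m else 0.

(* wt(w) = prod_k prod_{j in C_k} w_Box(i_j,k), as exponent vectors *)
Definition wt_pdeg w m : nat :=
  \sum_(k < n) \sum_(j < L | inC w k j) letter_pdeg w k j m.
Definition wt_qdeg w m : nat :=
  \sum_(k < n) \sum_(j < L | inC w k j) letter_qdeg w k j m.

Definition inOmegaI (I : {set 'I_n}) w : Prop :=
  inOmega w /\ forall m, m \in I -> wt_qdeg w m = 0.

Definition starts_bullet1 w : Prop :=
  exists k : 'I_n, val k = 0 /\ onth w 0 = Some (Bullet k).

Definition inOmega' (I : {set 'I_n}) w : Prop :=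
  inOmegaI I w /\ starts_bullet1 w.

End Words.

(* Since w starts with bullet_1 and the bullets are in cyclic order, their
   positions b_1 < ... < b_n increase linearly, C_k is the interval
   (b_k, b_{k+1}) and C_n is (b_n, L].  The exponent of q_1 in w_Box(i,k) is
   1 exactly when k < i, so q_1 is absent from wt(w) iff every box_i lies in
   an arc C_k with i <= k.  As the box at position j lies in the arc of the
   last bullet to its left, this says b_i < j. *)
From mathcomp Require Import all_boot.
From mathcomp Require Import zify.
Set Implicit Arguments. Unset Strict Implicit.

Lemma wBox_qdeg_first n (i k m : 'I_n) : val m = 0 -> wBox_qdeg i k m = (k < i : nat).
Proof. by move=> m0; rewrite /wBox_qdeg m0 ltn0 leq0n; case: leqP. Qed.

Lemma wt_qdeg_first_eq0 L n (w : seq (letter n)) (m : 'I_n) : val m = 0 ->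
  wt_qdeg L w m = 0 <->
  forall (k i : 'I_n) j, inC L w k j -> onth w j = Some (Box i) -> i <= k.
Proof.
move=> m0; split.
  move/eqP; rewrite sum_nat_eq0 => /forallP sum0 k i j jC wj.
  have jL : j < L by case/and3P: jC.
  move: (sum0 k); rewrite sum_nat_eq0 => /forallP/(_ (Ordinal jL)).
  by rewrite /= jC /letter_qdeg wj /= wBox_qdeg_first //; case: ltnP.
move=> arc_le; apply: big1 => k _; apply: big1 => j jC.
rewrite /letter_qdeg; case wj: onth => [[b|i]|] //.
by rewrite wBox_qdeg_first // ltnNge (arc_le _ _ _ jC wj).
Qed.

Lemma val_succl n (k : 'I_n) : k.+1 < n -> val (succl k) = k.+1.
Proof. by move=> kn; rewrite /= modn_small. Qed.

Lemma val_succl_last n (k : 'I_n) : k.+1 = n -> val (succl k) = 0.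
Proof. by move=> kn; rewrite /= kn modnn. Qed.

Section BulletsFromTheLeft.
Variables (L n : nat) (w : seq (letter n)).
Hypotheses (w_size : size w = L) (w_bullet1 : forall k, count_mem (Bullet k) w = 1)
  (w_cyclic : forall k k', ~~ inC L w k (bpos w k')).
Variable k0 : 'I_n.
Hypotheses (k0_first : val k0 = 0) (w_start : onth w 0 = Some (Bullet k0)).
Implicit Types (i k m : 'I_n) (j : nat).

Lemma bullet_in_word k : Bullet k \in w.
Proof. by rewrite -has_pred1 has_count w_bullet1. Qed.

Lemma bpos_lt k : bpos w k < L.
Proof. by rewrite -w_size index_mem bullet_in_word. Qed.

Lemma nth_bpos k x0 : nth x0 w (bpos w k) = Bullet k.
Proof. by rewrite nth_index // bullet_in_word. Qed.

Lemma bpos_inj : injective (bpos w).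
Proof. by move=> k k' E; have := nth_bpos k (Bullet k); rewrite E nth_bpos => -[]. Qed.

Lemma bpos_first : bpos w k0 = 0.
Proof. by move: w_start; rewrite /bpos; case: w => [|x s] //= [->]; rewrite eqxx. Qed.

Lemma bpos_eq0 k : (bpos w k == 0) = (val k == 0).
Proof.
by rewrite -{1}bpos_first -k0_first (inj_eq bpos_inj) -(inj_eq val_inj).
Qed.

Lemma box_not_bullet j i k : onth w j = Some (Box i) -> j != bpos w k.
Proof. by move=> wj; apply/eqP => E; move: (onth_nth (Bullet k) _ _ _ wj); rewrite E nth_bpos. Qed.

(* Otherwise b_1 = 0 would lie in the wrapping arc from b_k to b_{k+1}. *)
Lemma bpos_succl k : k.+1 < n -> bpos w k < bpos w (succl k).
Proof.
move=> kn; have sk := val_succl kn.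
have ne : bpos w k != bpos w (succl k).
  by rewrite (inj_eq bpos_inj) -(inj_eq val_inj) sk neq_ltn ltnSn.
have sk0 : bpos w (succl k) != 0 by rewrite bpos_eq0 sk.
have bkL := bpos_lt k; have bskL := bpos_lt (succl k).
rewrite ltnNge; apply/negP => le_sk; move: (w_cyclic k k0) (ne) sk0.
rewrite bpos_first /inC /fdist (negbTE ne) !modn_small; lia.
Qed.

Lemma ltn_bpos k m : k < m -> bpos w k < bpos w m.
Proof.
case: m => m; elim: m => [|m IH] mn //= km.
have mn' : m < n by lia.
have -> : Ordinal mn = succl (Ordinal mn') by apply: val_inj; rewrite val_succl.
have step := bpos_succl (k := Ordinal mn') mn.
case: (ltngtP k m) => [lt_km|gt_km|eq_km]; first exact: ltn_trans (IH _ lt_km) step.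
  by move: km; rewrite ltnS leqNgt gt_km.
by rewrite (_ : k = Ordinal mn') //; apply: val_inj.
Qed.

Lemma leq_bpos k m : (bpos w k <= bpos w m) = (k <= m).
Proof.
case: (ltngtP k m) => [/ltn_bpos/ltnW //|/ltn_bpos lt_mk|/val_inj ->]; last exact: leqnn.
by rewrite leqNgt lt_mk.
Qed.

Definition arc_end k : nat := if k.+1 < n then bpos w (succl k) else L.

Lemma arc_end_le k : arc_end k <= L.
Proof. by rewrite /arc_end; case: ifP => // _; apply: ltnW; apply: bpos_lt. Qed.

Lemma fdist_succl k : fdist L (bpos w k) (bpos w (succl k)) = arc_end k - bpos w k.
Proof.
have bkL := bpos_lt k; rewrite /arc_end; case: ifPn => kn; rewrite /fdist.
  have lt_k_sk := bpos_succl kn; have skL := bpos_lt (succl k).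
  rewrite ltn_eqF // -addnBAC; last exact: ltnW.
  by rewrite modnDr modn_small //; lia.
have /eqP -> : bpos w (succl k) == 0.
  by rewrite bpos_eq0 val_succl_last //; have := ltn_ord k; lia.
case: eqP => [->|/eqP bk0]; first by rewrite subn0.
by rewrite add0n modn_small; lia.
Qed.

Lemma inCE k j : inC L w k j = (bpos w k < j < arc_end k).
Proof.
have := arc_end_le k; have := bpos_lt k.
rewrite /inC fdist_succl; case: (ltnP j L) => [jL|Lj] bkL eL /=; last by lia.
case: (leqP (bpos w k) j) => [bkj|jbk].
  by rewrite -addnBAC // modnDr modn_small; lia.
by rewrite modn_small; lia.
Qed.

Lemma box_right_of_bullet j i : onth w j = Some (Box i) ->
  (bpos w i < j) <-> (forall k, inC L w k j -> i <= k).
Proof.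
move=> wj; split=> [bij k|arc_le].
  rewrite inCE /arc_end; apply: contraTT; rewrite -ltnNge => lt_ki.
  have kn : k.+1 < n by have := ltn_ord i; lia.
  have : bpos w (succl k) <= bpos w i by rewrite leq_bpos val_succl.
  by rewrite kn; lia.
rewrite ltnNge; apply/negP => le_j_bi.
have bk0j : bpos w k0 < j.
  by rewrite bpos_first lt0n -bpos_first; apply: box_not_bullet wj.
case: (@arg_maxnP _ k0 (fun k => bpos w k < j) val bk0j) => k bkj k_max.
have lt_ki : k < i by rewrite ltnNge -leq_bpos -ltnNge (leq_trans bkj le_j_bi).
have kn : k.+1 < n by have := ltn_ord i; lia.
have j_sk : j < bpos w (succl k).
  rewrite ltn_neqAle (box_not_bullet _ wj) /= leqNgt.
  by apply/negP => /k_max; have /= -> := val_succl kn; rewrite ltnn.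
by have := arc_le k; rewrite inCE /arc_end kn bkj j_sk => /(_ isT); lia.
Qed.

End BulletsFromTheLeft.

Theorem proposition5p3 (L n : nat) (w : seq (letter n)) :
  1 <= n <= L ->
  inOmega L w ->
  starts_bullet1 w ->
  (inOmega' L [set k : 'I_n | val k == 0] w <->
   forall (i : 'I_n) (j : nat), j < L -> onth w j = Some (Box i) ->
     bpos w i < j).
Proof.
move=> _ [w_size w_bullet1 w_cyclic] [k0 [k0_first w_start]].
have boxE := box_right_of_bullet w_size w_bullet1 w_cyclic k0_first w_start.
have wtE := wt_qdeg_first_eq0 L w k0_first.
split=> [[[_ q1_free] _] i j _ wj|box_right].
  apply/(boxE _ _ wj) => k kC.
  by apply: (proj1 wtE) kC wj; apply: q1_free; rewrite inE k0_first.
split; last by exists k0.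
split=> // m; rewrite inE => /eqP m_first.
apply/(wt_qdeg_first_eq0 L w m_first) => k i j kC wj.
have jL : j < L by case/and3P: kC.
by apply: (proj1 (boxE _ _ wj)) kC; apply: box_right.
Qed.
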